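(* Let $\mathcal X$ and $\mathcal Y$ be nonempty compact $\beta$-strongly convex sets (with respect to norms $\|\cdot\|_{\mathcal X}$, $\|\cdot\|_{\mathcal Y}$), and let $\mathcal L:\mathcal X\times\mathcal Y\to\mathbb R$ be a differentiable convex-concave function such that $F(z):=(\nabla_x\mathcal L(z),-\nabla_y\mathcal L(z))$ satisfies $\max(\|\nabla_x\mathcal L(z)-\nabla_x\mathcal L(z')\|_{\mathcal X^*},\|\nabla_y\mathcal L(z)-\nabla_y\mathcal L(z')\|_{\mathcal Y^*})\le L\|z-z'\|_{\mathcal X\times\mathcal Y}$ for all $z,z'$. If $\min(\|\nabla_x\mathcal L(z)\|_{\mathcal X^*},\|\nabla_y\mathcal L(z)\|_{\mathcal Y^*})\ge\delta>0$ for all $z\in\mathcal X\times\mathcal Y$, then the oracle function $z\mapsto s(z):=\arg\min_{s\in\mathcal X\times\mathcal Y}\langle s,F(z)\rangle$ is well defined (the minimizer is unique) and is $\frac{4L}{\delta\beta}$-Lipschitz continuous with respect to the norm $\|(x,y)\|_{\mathcal X\times\mathcal Y}:=\|x\|_{\mathcal X}+\|y\|_{\mathcal Y}$.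
   Context: $\mathcal L$ is convex-concave if $\mathcal L(\cdot,y)$ is convex for every $y$ and $\mathcal L(x,\cdot)$ is concave for every $x$. $\|\cdot\|_{\mathcal X^*}$ denotes the dual norm of $\|\cdot\|_{\mathcal X}$ (similarly for $\mathcal Y$). A convex set $\mathcal X$ is $\beta$-strongly convex with respect to $\|\cdot\|$ if for any $x,y\in\mathcal X$ and $\gamma\in[0,1]$, the $\|\cdot\|$-ball of radius $\gamma(1-\gamma)\frac\beta2\|x-y\|^2$ centered at $\gamma x+(1-\gamma)y$ is contained in $\mathcal X$. *)

From HB Require Import structures.
From mathcomp Require Import all_boot all_order all_algebra.
From mathcomp Require Import all_classical all_reals all_analysis.
Set Implicit Arguments. Unset Strict Implicit. Unset Printing Implicit Defensive.
Import Order.TTheory GRing.Theory Num.Theory.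
Import numFieldNormedType.Exports.
Local Open Scope classical_set_scope.
Local Open Scope ring_scope.

Definition dotv (R : realType) (n : nat) (u v : 'rV[R]_n) : R :=
  \sum_(i < n) u ord0 i * v ord0 i.

Definition is_norm (R : realType) (n : nat) (N : 'rV[R]_n -> R) : Prop :=
  [/\ forall v, 0 <= N v,
      forall v, N v = 0 -> v = 0,
      forall (a : R) v, N (a *: v) = `|a| * N v
    & forall u v, N (u + v) <= N u + N v].

Definition dual_norm (R : realType) (n : nat) (N : 'rV[R]_n -> R)
  (w : 'rV[R]_n) : R :=
  sup [set dotv w v | v in [set v | N v <= 1]].

Definition convex_set (R : realType) (n : nat) (X : set 'rV[R]_n) : Prop :=
  forall x y (g : R), X x -> X y -> 0 <= g <= 1 ->
    X (g *: x + (1 - g) *: y).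

Definition strongly_convex_set (R : realType) (n : nat) (N : 'rV[R]_n -> R)
  (beta : R) (X : set 'rV[R]_n) : Prop :=
  convex_set X /\
  forall x y (g : R), X x -> X y -> 0 <= g <= 1 ->
    forall w, N (w - (g *: x + (1 - g) *: y))
                <= g * (1 - g) * (beta / 2) * N (x - y) ^+ 2 -> X w.

From HB Require Import structures.
From mathcomp Require Import all_boot all_order all_algebra.
From mathcomp Require Import all_classical all_reals all_analysis.
From mathcomp Require Import ring lra.
Import Order.TTheory GRing.Theory Num.Theory.
Import numFieldNormedType.Exports.
Local Open Scope classical_set_scope.
Local Open Scope ring_scope.

(* Minimizing a linear functional <., g> over a beta-strongly convex set X has
   quadratic growth: if s is the minimizer, then
   (beta/4) |g|_* N(x - s)^2 <= <x - s, g> for every x in X, because the ball of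
   radius (beta/8) N(x - s)^2 around the midpoint of s and x stays in X.  Adding
   this inequality at the minimizers s, s' of g, g' with |g|_*, |g'|_* >= delta
   gives (beta delta / 2) N(s - s')^2 <= <g - g', s' - s> <= |g - g'|_* N(s - s'),
   so the minimizer is 2/(beta delta)-Lipschitz in g.  The objective over X x Y
   splits into its two factors, and the Lipschitz bound on the gradients yields
   the constant 4L/(delta beta). *)

Lemma lipschitz_continuous {R : realType} {V : normedModType R} {f : V -> R}
    {C : R} :
  0 < C -> (forall u v, `|f u - f v| <= C * `|u - v|) -> continuous f.
Proof.
move=> C_gt0 f_lip x; apply/cvgrPdist_lt => e e_gt0.
have : \forall y \near x, `|x - y| < e / C.
  by apply: (@cvgr_dist_lt _ _ _ (nbhs x) _ id x cvg_id); rewrite divr_gt0.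
apply: filterS => y xy; apply: le_lt_trans (f_lip x y) _.
by rewrite -ltr_pdivlMl // mulrC.
Qed.

Section DotProduct.
Context {R : realType} {k : nat}.
Implicit Types (u v w : 'rV[R]_k).

Lemma dotvC u v : dotv u v = dotv v u.
Proof. by apply: eq_bigr => i _; rewrite mulrC. Qed.

Lemma dotvDl u v w : dotv (u + v) w = dotv u w + dotv v w.
Proof. by rewrite /dotv -big_split; apply: eq_bigr => i _; rewrite mxE mulrDl. Qed.

Lemma dotvZl a u w : dotv (a *: u) w = a * dotv u w.
Proof. by rewrite /dotv mulr_sumr; apply: eq_bigr => i _; rewrite mxE mulrA. Qed.

Lemma dotvNl u w : dotv (- u) w = - dotv u w.
Proof. by rewrite -scaleN1r dotvZl mulN1r. Qed.

Lemma dotvBl u v w : dotv (u - v) w = dotv u w - dotv v w.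
Proof. by rewrite dotvDl dotvNl. Qed.

Lemma dotvNr u w : dotv w (- u) = - dotv w u.
Proof. by rewrite dotvC dotvNl dotvC. Qed.

Lemma dotv0r w : dotv w 0 = 0.
Proof. by rewrite /dotv big1 // => i _; rewrite mxE mulr0. Qed.

Lemma normr_coord_le u i : `|u ord0 i| <= `|u|.
Proof.
have /mapP[j _ ->] : `|u ord0 i| \in [seq `|u x.1 x.2| | x : 'I_1 * 'I_k].
  by apply/mapP; exists (ord0, i) => //=; rewrite mem_enum.
by rewrite [leRHS]/Num.norm /= mx_normrE; apply/bigmax_geP; right; exists j.
Qed.

Lemma normr_dotv_le u w : `|dotv u w| <= `|u| * \sum_i `|w ord0 i|.
Proof.
rewrite /dotv mulr_sumr; apply: le_trans (ler_norm_sum _ _ _) _.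
by apply: ler_sum => i _; rewrite normrM ler_wpM2r ?normr_coord_le.
Qed.

Lemma dotv_continuous w : continuous (fun u : 'rV[R]_k => dotv u w).
Proof.
have C_gt0 : (0 : R) < \sum_i `|w ord0 i| + 1 by rewrite ltr_wpDl ?sumr_ge0.
apply: (lipschitz_continuous C_gt0) => u v; rewrite -dotvBl.
by apply: le_trans (normr_dotv_le _ _) _; rewrite mulrC ler_wpM2r ?lerDl.
Qed.

End DotProduct.

Section Norm.
Context {R : realType} {k : nat} {N : 'rV[R]_k -> R}.
Hypothesis normN : is_norm N.

Lemma is_norm_ge0 v : 0 <= N v. Proof. by case: normN. Qed.
Lemma is_norm_eq0 v : N v = 0 -> v = 0. Proof. by case: normN => _ + _ _; apply. Qed.
Lemma is_normZ a v : N (a *: v) = `|a| * N v. Proof. by case: normN. Qed.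
Lemma is_normD u v : N (u + v) <= N u + N v. Proof. by case: normN. Qed.

Lemma is_norm0 : N 0 = 0.
Proof. by rewrite -(scale0r (0 : 'rV[R]_k)) is_normZ normr0 mul0r. Qed.

Lemma is_normN v : N (- v) = N v.
Proof. by rewrite -scaleN1r is_normZ normrN normr1 mul1r. Qed.

Lemma is_norm_distC u v : N (u - v) = N (v - u).
Proof. by rewrite -is_normN opprB. Qed.

Lemma is_norm_gt0 v : v != 0 -> 0 < N v.
Proof.
by move=> v0; rewrite lt_def is_norm_ge0 andbT; apply: contra_neq v0 => /is_norm_eq0.
Qed.

Lemma is_norm_le_mx_norm : exists2 C, 0 < C & forall v, N v <= C * `|v|.
Proof.
pose C := \sum_(i < k) N (delta_mx ord0 i) + 1.
exists C => [|v]; first by rewrite ltr_wpDl // sumr_ge0 // => i _; apply: is_norm_ge0.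
rewrite {1}(row_sum_delta v) /C mulrDl mul1r mulr_suml.
apply: le_trans (_ : \sum_i N (delta_mx ord0 i) * `|v| <= _); last by rewrite lerDl.
elim/big_rec2: _ => [|i y1 y2 _ y12]; first by rewrite is_norm0.
apply: le_trans (is_normD _ _) _; apply: lerD => //.
by rewrite is_normZ mulrC ler_wpM2l ?is_norm_ge0 ?normr_coord_le.
Qed.

Lemma is_norm_continuous : continuous N.
Proof.
have [C C_gt0 NC] := is_norm_le_mx_norm.
apply: (lipschitz_continuous C_gt0) => u v; apply: le_trans (NC (u - v)).
have := is_normD (u - v) v; have := is_normD (v - u) u.
rewrite !subrK (is_norm_distC v) => ? ?.
by rewrite ler_norml; apply/andP; split; lra.
Qed.

(* The minimum of [N] on the compact unit sphere of the sup norm is positive. *)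
Lemma mx_norm_le_is_norm : exists2 C, 0 < C & forall v, `|v| <= C * N v.
Proof.
have [[v0 v0_neq0]|all0] := pselect (exists v : 'rV[R]_k, v != 0); last first.
  exists 1 => // v; have -> : v = 0 by apply: contra_notP all0 => /eqP; exists v.
  by rewrite normr0 is_norm0 mulr0.
pose S := [set v : 'rV[R]_k | `|v| = 1].
have S0 : S !=set0.
  exists (`|v0|^-1 *: v0); rewrite /S /= normrZ normfV normr_id mulVf //.
  by rewrite normr_eq0.
have cS : compact S.
  apply: bounded_closed_compact.
    exists 1; split; first by rewrite num_real.
    by move=> x x1 v; rewrite /S /= => ->; apply: ltW.
  rewrite (_ : S = Num.norm @^-1` [set 1]) //.
  by apply: preimage_closed; [move=> x _; apply: norm_continuous | apply: closed_eq].
have [c Sc cmin] := compact_EVT_min S0 cS (continuous_subspaceT is_norm_continuous).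
have Nc_gt0 : 0 < N c.
  apply: is_norm_gt0; apply/eqP => c0; move: Sc.
  by rewrite inE /S /= c0 normr0 => /eqP; rewrite eq_sym oner_eq0.
exists (N c)^-1 => [|v]; first by rewrite invr_gt0.
have [->|v_neq0] := eqVneq v 0; first by rewrite normr0 is_norm0 mulr0.
have v_gt0 : 0 < `|v| by rewrite normr_gt0.
have := cmin (`|v|^-1 *: v).
rewrite !inE /S /= normrZ normfV normr_id mulVf ?gt_eqF // => /(_ erefl).
rewrite is_normZ normfV normr_id => Nvc.
by rewrite mulrC ler_pdivlMr // -ler_pdivlMl.
Qed.

Let dual_set w := [set dotv w v | v in [set v | N v <= 1]].

Let dual_set0 w : dual_set w 0.
Proof. by exists 0; rewrite /= ?is_norm0 ?dotv0r. Qed.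

Lemma dual_norm_has_sup w : has_sup (dual_set w).
Proof.
split; first by exists 0.
have [C C_gt0 vC] := mx_norm_le_is_norm.
exists (C * \sum_i `|w ord0 i|) => _ [v /= Nv <-].
rewrite dotvC; apply: le_trans (ler_norm _) _; apply: le_trans (normr_dotv_le _ _) _.
rewrite ler_wpM2r ?sumr_ge0 //; apply: le_trans (vC v) _.
by rewrite ler_piMr // ltW.
Qed.

Lemma dual_norm_ge0 w : 0 <= dual_norm N w.
Proof. exact: sup_upper_bound (dual_norm_has_sup w) _ (dual_set0 w). Qed.

Lemma dotv_le_dual_norm w v : dotv w v <= dual_norm N w * N v.
Proof.
have [->|v_neq0] := eqVneq v 0; first by rewrite dotv0r is_norm0 mulr0.
have Nv_gt0 : 0 < N v by apply: is_norm_gt0.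
rewrite -ler_pdivrMr // dotvC mulrC -dotvZl dotvC.
apply: (sup_upper_bound (dual_norm_has_sup w)); exists ((N v)^-1 *: v) => //=.
by rewrite is_normZ gtr0_norm ?invr_gt0 // mulVf ?gt_eqF.
Qed.

Lemma dual_norm_le w c : (forall v, N v <= 1 -> dotv w v <= c) -> dual_norm N w <= c.
Proof.
by move=> wc; apply: ge_sup => [|_ [v /wc ? <-] //]; exists 0; apply: dual_set0.
Qed.

Lemma dual_normN w : dual_norm N (- w) = dual_norm N w.
Proof.
suff le_dualN u : dual_norm N (- u) <= dual_norm N u.
  by apply/le_anti; rewrite le_dualN -{1}(opprK w) le_dualN.
apply: dual_norm_le => v Nv; rewrite dotvNl -dotvNr.
by apply: le_trans (dotv_le_dual_norm _ _) _; rewrite is_normN ler_piMr ?dual_norm_ge0.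
Qed.

End Norm.

Definition dotv_argmin {R : realType} {k : nat} (X : set 'rV[R]_k) (g s : 'rV[R]_k) :=
  X s /\ forall x, X x -> dotv s g <= dotv x g.

Lemma compact_dotv_argmin {R : realType} {k : nat} [X : set 'rV[R]_k] (g : 'rV[R]_k) :
  X !=set0 -> compact X -> exists s, dotv_argmin X g s.
Proof.
move=> X0 cX.
have [s Xs smin] := compact_EVT_min X0 cX (continuous_subspaceT (dotv_continuous g)).
by exists s; split=> [|x Xx]; [rewrite inE in Xs | apply: smin; rewrite inE].
Qed.

Lemma dotv_argmin_pair {R : realType} {n m : nat} (X : set 'rV[R]_n) (Y : set 'rV[R]_m)
    g1 g2 (s : 'rV[R]_n * 'rV[R]_m) :
  (X s.1 /\ Y s.2 /\ forall s' : 'rV[R]_n * 'rV[R]_m, X s'.1 -> Y s'.2 ->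
     dotv s.1 g1 + dotv s.2 g2 <= dotv s'.1 g1 + dotv s'.2 g2) <->
  dotv_argmin X g1 s.1 /\ dotv_argmin Y g2 s.2.
Proof.
split=> [[Xs [Ys smin]]|[[Xs s1min] [Ys s2min]]].
  split; split=> // x Xx.
    by have := smin (x, s.2) Xx Ys; rewrite lerD2r.
  by have := smin (s.1, x) Xs Xx; rewrite lerD2l.
by do 2!split=> //; move=> s' Xs' Ys'; apply: lerD; [apply: s1min | apply: s2min].
Qed.

Section StronglyConvexArgmin.
Context {R : realType} {k : nat} {N : 'rV[R]_k -> R} {beta : R} {X : set 'rV[R]_k}.
Hypotheses (normN : is_norm N) (beta_gt0 : 0 < beta)
  (scX : strongly_convex_set N beta X).

Lemma dotv_argmin_growth [g s x] : dotv_argmin X g s -> X x ->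
  beta / 4 * dual_norm N g * N (x - s) ^+ 2 <= dotv x g - dotv s g.
Proof.
move=> [Xs smin] Xx; have [_ ballX] := scX.
have gap_ge0 := smin x Xx; have dual_ge0 := dual_norm_ge0 normN g.
set r := beta / 8 * N (x - s) ^+ 2.
have -> : beta / 4 * dual_norm N g * N (x - s) ^+ 2 = 2 * r * dual_norm N g.
  by rewrite /r; field.
have [r_le0|r_gt0] := lerP r 0; first by nra.
set m := 2^-1 *: x + (1 - 2^-1) *: s.
have half_01 : 0 <= (2^-1 : R) <= 1.
  by rewrite invr_ge0 ler0n invf_le1 ?ler1n ?ltr0n.
have ball_in_X v : N v <= 1 -> X (m - r *: v).
  move=> Nv; apply: (ballX x s 2^-1) => //.
  rewrite addrAC subrr add0r (is_normN normN) (is_normZ normN) gtr0_norm //.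
  have -> : 2^-1 * (1 - 2^-1) * (beta / 2) * N (x - s) ^+ 2 = r by rewrite /r; field.
  by rewrite ler_piMr // ltW.
have r2_gt0 : 0 < 2 * r by rewrite mulr_gt0.
suff : dual_norm N g <= (dotv x g - dotv s g) / (2 * r).
  by rewrite ler_pdivlMr // => ?; lra.
apply: (dual_norm_le normN) => v Nv; have := smin _ (ball_in_X v Nv).
by rewrite dotvBl dotvZl dotvDl !dotvZl (dotvC v) ler_pdivlMr // => ?; lra.
Qed.

Lemma dotv_argmin_unique [g s s'] : 0 < dual_norm N g ->
  dotv_argmin X g s -> dotv_argmin X g s' -> s' = s.
Proof.
move=> g_gt0 ms [Xs' s'min]; have := dotv_argmin_growth ms Xs'.
have := s'min _ ms.1; have c_gt0 : 0 < beta / 4 * dual_norm N g.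
  by rewrite mulr_gt0 ?divr_gt0.
move=> gap_le0 growth; have : N (s' - s) ^+ 2 <= 0.
  by rewrite -(pmulr_rle0 _ c_gt0); lra.
rewrite le_eqVlt ltNge sqr_ge0 orbF sqrf_eq0 => /eqP /(is_norm_eq0 normN) /eqP.
by rewrite subr_eq0 => /eqP.
Qed.

Lemma dotv_argmin_lipschitz [delta g g' s s'] : 0 < delta ->
  delta <= dual_norm N g -> delta <= dual_norm N g' ->
  dotv_argmin X g s -> dotv_argmin X g' s' ->
  N (s - s') <= 2 / (beta * delta) * dual_norm N (g - g').
Proof.
move=> delta_gt0 dg dg' ms ms'.
have growth := dotv_argmin_growth ms ms'.1.
have growth' := dotv_argmin_growth ms' ms.1.
have dual_bound := dotv_le_dual_norm normN (g - g') (s' - s).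
rewrite dotvBl !(dotvC _ (s' - s)) !dotvBl in dual_bound.
rewrite (is_norm_distC normN s') in growth dual_bound.
set d := N (s - s') in growth growth' dual_bound *.
have d_ge0 : 0 <= d by apply: is_norm_ge0.
have D_ge0 := dual_norm_ge0 normN (g - g').
have c_ge0 : 0 <= beta / 4 * d ^+ 2 by rewrite mulr_ge0 ?sqr_ge0 ?divr_ge0 ?ltW.
have := ler_wpM2r c_ge0 dg; have := ler_wpM2r c_ge0 dg' => delta_g' delta_g.
have key : beta * delta / 2 * d ^+ 2 <= dual_norm N (g - g') * d by lra.
rewrite mulrAC ler_pdivlMr ?mulr_gt0 //.
have [d_le0|d_gt0] := lerP d 0.
  have -> : d = 0 by apply/le_anti/andP.
  by rewrite mul0r mulr_ge0.
have : beta * delta / 2 * d <= dual_norm N (g - g').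
  by rewrite -(ler_pM2r d_gt0); move: key; rewrite expr2 mulrA.
lra.
Qed.

End StronglyConvexArgmin.

Theorem theorem3 (R : realType) (n m : nat)
  (NX : 'rV[R]_n -> R) (NY : 'rV[R]_m -> R)
  (X : set 'rV[R]_n) (Y : set 'rV[R]_m) (beta Lc delta : R)
  (Lf : 'rV[R]_n * 'rV[R]_m -> R)
  (gx : 'rV[R]_n * 'rV[R]_m -> 'rV[R]_n) (gy : 'rV[R]_n * 'rV[R]_m -> 'rV[R]_m) :
  is_norm NX -> is_norm NY ->
  0 < beta ->
  X !=set0 -> Y !=set0 -> compact X -> compact Y ->
  strongly_convex_set NX beta X -> strongly_convex_set NY beta Y ->
  (* differentiability, with gradients gx (in x) and gy (in y) *)
  (forall z, X z.1 -> Y z.2 ->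
     differentiable Lf z /\
     forall u v, 'd Lf z (u, v) = dotv (gx z) u + dotv (gy z) v) ->
  (* convex-concave on X x Y *)
  (forall y, Y y -> forall a b (t : R), X a -> X b -> 0 <= t <= 1 ->
     Lf (t *: a + (1 - t) *: b, y) <= t * Lf (a, y) + (1 - t) * Lf (b, y)) ->
  (forall x, X x -> forall a b (t : R), Y a -> Y b -> 0 <= t <= 1 ->
     t * Lf (x, a) + (1 - t) * Lf (x, b) <= Lf (x, t *: a + (1 - t) *: b)) ->
  (* Lipschitz gradients *)
  (forall z z', X z.1 -> Y z.2 -> X z'.1 -> Y z'.2 ->
     Num.max (dual_norm NX (gx z - gx z')) (dual_norm NY (gy z - gy z'))
       <= Lc * (NX (z.1 - z'.1) + NY (z.2 - z'.2))) ->
  0 < delta ->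
  (forall z, X z.1 -> Y z.2 ->
     delta <= Num.min (dual_norm NX (gx z)) (dual_norm NY (gy z))) ->
  let obj z (s : 'rV[R]_n * 'rV[R]_m) := dotv s.1 (gx z) + dotv s.2 (- gy z) in
  let is_min z s := X s.1 /\ Y s.2 /\
        forall s', X s'.1 -> Y s'.2 -> obj z s <= obj z s' in
  (forall z, X z.1 -> Y z.2 ->
     exists s, is_min z s /\ forall s', is_min z s' -> s' = s) /\
  (forall z z' s s', X z.1 -> Y z.2 -> X z'.1 -> Y z'.2 ->
     is_min z s -> is_min z' s' ->
     NX (s.1 - s'.1) + NY (s.2 - s'.2)
       <= (4 * Lc) / (delta * beta) * (NX (z.1 - z'.1) + NY (z.2 - z'.2))).
Proof.
move=> normX normY beta_gt0 X0 Y0 cX cY scX scY _ _ _ grad_lip delta_gt0 grad_ge.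
move=> obj is_min.
have [dX dY] : (forall z, X z.1 -> Y z.2 -> delta <= dual_norm NX (gx z)) /\
               (forall z, X z.1 -> Y z.2 -> delta <= dual_norm NY (- gy z)).
  by split=> z Xz Yz; have := grad_ge z Xz Yz;
    rewrite le_min ?(dual_normN normY) => /andP[].
split=> [z Xz Yz|z z' s s' Xz Yz Xz' Yz'].
  have [s1 ms1] := compact_dotv_argmin (gx z) X0 cX.
  have [s2 ms2] := compact_dotv_argmin (- gy z) Y0 cY.
  exists (s1, s2); split=> [|[s1' s2'] /dotv_argmin_pair[/= ms1' ms2']].
    exact/dotv_argmin_pair.
  have gX_gt0 := lt_le_trans delta_gt0 (dX z Xz Yz).
  have gY_gt0 := lt_le_trans delta_gt0 (dY z Xz Yz).
  by rewrite (dotv_argmin_unique normX beta_gt0 scX gX_gt0 ms1 ms1')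
             (dotv_argmin_unique normY beta_gt0 scY gY_gt0 ms2 ms2').
move=> /dotv_argmin_pair[ms1 ms2] /dotv_argmin_pair[ms1' ms2'].
have lipX := dotv_argmin_lipschitz normX beta_gt0 scX delta_gt0
  (dX _ Xz Yz) (dX _ Xz' Yz') ms1 ms1'.
have lipY := dotv_argmin_lipschitz normY beta_gt0 scY delta_gt0
  (dY _ Xz Yz) (dY _ Xz' Yz') ms2 ms2'.
rewrite -opprD (dual_normN normY) in lipY.
have := grad_lip z z' Xz Yz Xz' Yz'; rewrite ge_max => /andP[gradX gradY].
have c_ge0 : 0 <= 2 / (beta * delta) by rewrite divr_ge0 ?mulr_ge0 ?ltW.
have := ler_wpM2l c_ge0 gradX; have := ler_wpM2l c_ge0 gradY.
rewrite (mulrC delta); lra.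
Qed.
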